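(* Let $(\boldsymbol{x}_i)_{i\geq 0}$ be the two-dimensional Sobol' sequence in $[0,1]^2$, and for $n\geq 1$ let $P_n=(\boldsymbol{x}_i)_{0\leq i<n}$ and $q(P_n)=\frac{1}{2}\min_{0\leq i<j<n}\|\boldsymbol{x}_i-\boldsymbol{x}_j\|$, where $\|\cdot\|$ is the Euclidean norm. If $n=2^{m}-1$ where $m=2^w-1$ for some integer $w>1$, then \[ q(P_n)=\frac{1}{\sqrt{2}(n+1)}. \]
   Context: The two-dimensional Sobol' sequence is defined as follows. For a non-negative integer $n$ with binary expansion $n=n_0+n_1 2+n_2 2^2+\cdots$ ($n_k\in\{0,1\}$, finitely many nonzero), the $n$-th point is $\boldsymbol{x}_n=(x_{n,1},x_{n,2})$ with $x_{n,j}=\sum_{k\geq 1} x_{n,j,k}2^{-k}$, where $(x_{n,j,1},x_{n,j,2},\ldots)^\top = C_j (n_0,n_1,n_2,\ldots)^\top \bmod 2$ (componentwise), for $j=1,2$. The infinite generating matrices $C_1=(c^{(1)}_{i,k})_{i,k\geq 1}$ and $C_2=(c^{(2)}_{i,k})_{i,k\geq1}$ are given by $c^{(1)}_{i,k}=1$ if $i=k$ and $0$ otherwise (identity matrix), and $c^{(2)}_{i,k}=\binom{k-1}{i-1}\bmod 2$ (Pascal matrix over $\mathbb{F}_2$), with the convention $\binom{a}{b}=0$ if $a<b$. The sequence is indexed starting from $\boldsymbol{x}_0$. *)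

From HB Require Import structures.
From mathcomp Require Import all_boot all_order all_algebra.
From mathcomp Require Import reals.
Set Implicit Arguments. Unset Strict Implicit. Unset Printing Implicit Defensive.
Import Order.TTheory GRing.Theory Num.Theory.
Local Open Scope ring_scope.

Definition nbit (n k : nat) : nat := odd (n %/ 2 ^ k).

(* i-th output digit (i >= 1) of the first coordinate: C_1 = identity,
   so x_{n,1,i} = n_{i-1}. *)
Definition sobol_digit1 (n i : nat) : nat := nbit n i.-1.

(* i-th output digit (i >= 1) of the second coordinate: C_2 = Pascal matrix
   mod 2, c_{i,k} = binom(k-1,i-1) mod 2, so
   x_{n,2,i} = (sum_{k>=1} binom(k-1,i-1) n_{k-1}) mod 2.
   Since n < 2^n, n_{k-1} = 0 for k-1 >= n, so the sum over k-1 < n is exact. *)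
Definition sobol_digit2 (n i : nat) : nat :=
  (\sum_(k < n) 'C(k, i.-1) * nbit n k)%N %% 2.

(* x_{n,j} = sum_{i>=1} x_{n,j,i} 2^{-i}; all digits with i > n vanish
   (both for C_1 and C_2), so summing over 1 <= i <= n is exact. *)
Definition sobol1 (R : realType) (n : nat) : R :=
  \sum_(1 <= i < n.+1) (sobol_digit1 n i)%:R / 2 ^+ i.
Definition sobol2 (R : realType) (n : nat) : R :=
  \sum_(1 <= i < n.+1) (sobol_digit2 n i)%:R / 2 ^+ i.

Definition sobol_dist (R : realType) (i j : nat) : R :=
  Num.sqrt ((sobol1 R i - sobol1 R j) ^+ 2 + (sobol2 R i - sobol2 R j) ^+ 2).

Definition pair_dists (R : realType) (n : nat) : seq R :=
  [seq sobol_dist R p.1 p.2 |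
     p <- [seq (i, j) | i <- iota 0 n, j <- iota 0 n] & (p.1 < p.2)%N].

(* q(P_n) = 1/2 * min_{0<=i<j<n} ||x_i - x_j|| (meaningful for n >= 2, where
   the list is nonempty; the fold is seeded with an element of the list). *)
Definition sep_radius (R : realType) (n : nat) : R :=
  let s := pair_dists R n in
  2^-1 * \big[Num.min/head 0 s]_(d <- s) d.

From HB Require Import structures.
From mathcomp Require Import all_boot all_order all_algebra.
From mathcomp Require Import reals.
From mathcomp Require Import zify ring lra.
Import Order.TTheory GRing.Theory Num.Theory.
Set Implicit Arguments. Unset Strict Implicit. Unset Printing Implicit Defensive.

(* For n < 2^m both coordinates of x_n are multiples of 2^-m: the numerators
   are obtained from the m low bits of n by bit reversal and by the Pascal
   matrix mod 2, and both maps are injective on [0, 2^m) since the Pascal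
   matrix is unitriangular.  Hence distinct points of P_{2^m} differ by at
   least 2^-m in each coordinate, i.e. 2 q(P_n) >= sqrt 2 / 2^m.  When
   m = 2h - 1 with h = 2^(w-1), the indices 2^(h-1) and 2^m - 2^h reach the
   bound: their numerators differ by one in both coordinates, because
   C(h-1, s) and C(m, s) are odd for all relevant s while C(h, s) is even
   for 0 < s < h. *)

Lemma big_nat_trunc (R : Type) (idx : R) (op : Monoid.law idx) (F : nat -> R) lo a b :
  lo <= minn a b -> (forall k, minn a b <= k -> F k = idx) ->
  \big[op/idx]_(lo <= k < a) F k = \big[op/idx]_(lo <= k < b) F k.
Proof.
move=> lo_le F0; suff cut c : minn a b <= c ->
    \big[op/idx]_(lo <= k < c) F k = \big[op/idx]_(lo <= k < minn a b) F k.
  by rewrite !cut ?geq_minl ?geq_minr.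
move=> le_c; rewrite (big_cat_nat lo_le le_c) /= [X in op _ X]big1_seq ?Monoid.mulm1 //.
by move=> k /andP[_]; rewrite mem_index_iota => /andP[le_k _]; apply: F0.
Qed.

Lemma odd_binX a s : odd 'C(2 ^ a, s) = (s == 0) || (s == 2 ^ a).
Proof.
case: s => [|t]; first by rewrite bin0.
have [lt_t|] := ltnP t.+1 (2 ^ a); last first.
  rewrite leq_eqVlt => /orP[/eqP<-|lt_a]; first by rewrite binn eqxx orbT.
  by rewrite bin_small // (gtn_eqF lt_a).
rewrite (ltn_eqF lt_t) orbF; apply/negbTE/negP => odd_bin.
have coprime_bin : coprime (2 ^ a) 'C(2 ^ a, t.+1) by rewrite coprimeXl ?coprime2n.
have : 2 ^ a %| t.+1 * 'C(2 ^ a, t.+1) by rewrite -mul_bin_diag dvdn_mulr.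
by rewrite Gauss_dvdl // => /(dvdn_leq (ltn0Sn t)); rewrite leqNgt lt_t.
Qed.

Lemma odd_bin_predX a s : odd 'C((2 ^ a).-1, s) = (s < 2 ^ a).
Proof.
elim: s => [|s IH]; first by rewrite bin0 expn_gt0.
have := congr1 odd (binS (2 ^ a).-1 s).
rewrite prednK ?expn_gt0 // oddD odd_binX IH /= => /(congr1 (addb^~ (s < 2 ^ a))).
rewrite -addbA addbb addbF => <-.
by case: eqP => [<-|]; rewrite ?ltnSn ?ltnn //; lia.
Qed.

Lemma hockey_stick h m s : h <= m ->
  \sum_(h <= k < m) 'C(k, s) + 'C(h, s.+1) = 'C(m, s.+1).
Proof.
elim: m => [|m IH]; first by rewrite leqn0 => /eqP->; rewrite big_geq.
rewrite leq_eqVlt => /orP[/eqP->|le_hm]; first by rewrite big_geq.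
by rewrite big_nat_recr //= addnAC IH // binS addnC.
Qed.

Lemma nbit_small n k : n < 2 ^ k -> nbit n k = 0.
Proof. by move=> lt_n; rewrite /nbit divn_small. Qed.

Lemma nbitS n k : nbit n k.+1 = nbit (n %/ 2) k.
Proof. by rewrite /nbit expnS divnMA. Qed.

Lemma nbit_inj m n n' : n < 2 ^ m -> n' < 2 ^ m ->
  (forall k, k < m -> nbit n k = nbit n' k) -> n = n'.
Proof.
elim: m n n' => [|m IH] n n'; first by rewrite expn0; lia.
rewrite expnS => lt_n lt_n' eq_bits.
have eq_half : n %/ 2 = n' %/ 2.
  by apply: IH => [||k lt_k]; rewrite -?nbitS ?eq_bits //; lia.
have := eq_bits 0 isT; rewrite /nbit expn0 !divn1 => eq_odd.
by rewrite (divn_eq n 2) (divn_eq n' 2) !modn2 eq_half; case: odd eq_odd; case: odd.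
Qed.

Lemma nbit_mulX x h k : nbit (x * 2 ^ h) k = if h <= k then nbit x (k - h) else 0.
Proof.
case: leqP => [le_hk|lt_kh]; first by rewrite /nbit -{1}(subnK le_hk) expnD divnMr ?expn_gt0.
rewrite /nbit -(subnK (ltnW lt_kh)) expnD mulnA mulnK ?expn_gt0 // oddM oddX.
by rewrite subn_eq0 leqNgt lt_kh andbF.
Qed.

Lemma nbitX p k : nbit (2 ^ p) k = (k == p).
Proof.
rewrite -[2 ^ p]mul1n nbit_mulX; case: (ltngtP k p) => [lt_kp|lt_pk|->]; rewrite ?subnn //.
by rewrite nbit_small //; have := ltn_expl (k - p) (ltnSn 1); lia.
Qed.

Lemma nbit_subn1X a q : nbit (2 ^ a - 1) q = (q < a).
Proof.
elim: q a => [|q IH] [|a]; try by rewrite expn0 subnn nbit_small ?expn_gt0.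
  by rewrite /nbit expn0 divn1 oddB ?expn_gt0 // oddX.
rewrite nbitS (_ : (2 ^ a.+1 - 1) %/ 2 = 2 ^ a - 1) ?IH //.
by rewrite expnS; have := expn_gt0 2 a; lia.
Qed.

Lemma nbit_subXX h m k : h <= m -> nbit (2 ^ m - 2 ^ h) k = (h <= k < m).
Proof.
move=> le_hm; rewrite -{1}(subnK le_hm) expnD -{2}[2 ^ h]mul1n -mulnBl nbit_mulX.
by case: (leqP h k) => le_hk; rewrite ?nbit_subn1X //=; lia.
Qed.

Lemma pascal_mod2_inj m (b b' : nat -> bool) :
  (forall r, r < m -> odd (\sum_(k < m) 'C(k, r) * b k) =
                      odd (\sum_(k < m) 'C(k, r) * b' k)) ->
  forall k, k < m -> b k = b' k.
Proof.
elim: m => // m IH eq_sums.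
have sum_top (c : nat -> bool) : \sum_(k < m.+1) 'C(k, m) * c k = c m.
  by rewrite big_ord_recr /= binn mul1n big1 // => k _; rewrite bin_small.
have eq_top : b m = b' m by rewrite -[b m]oddb -[b' m]oddb -!sum_top eq_sums.
move=> k; rewrite ltnS leq_eqVlt => /orP[/eqP->//|]; apply: IH => r lt_rm.
by have := eq_sums r (ltnW lt_rm); rewrite !big_ord_recr /= eq_top !oddD => /addIb.
Qed.

Definition digits_num (d : nat -> nat) (m : nat) : nat :=
  \sum_(1 <= i < m.+1) d i * 2 ^ (m - i).

Lemma digits_numS d m : digits_num d m.+1 = 2 * digits_num d m + d m.+1.
Proof.
rewrite /digits_num big_nat_recr //= subnn muln1 big_distrr /=; congr (_ + _).
by apply: eq_big_nat => i /andP[_ le_im]; rewrite subSn // expnS mulnCA.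
Qed.

Lemma eq_digits_num d e m :
  (forall i, 0 < i <= m -> d i = e i) -> digits_num d m = digits_num e m.
Proof. by move=> eq_de; apply: eq_big_nat => i /andP[i_gt0 lt_im]; rewrite eq_de ?i_gt0. Qed.

Lemma digits_num_inj d e m : (forall i, d i <= 1) -> (forall i, e i <= 1) ->
  digits_num d m = digits_num e m -> forall i, 0 < i <= m -> d i = e i.
Proof.
move=> d_le1 e_le1; elim: m => [|m IH]; first by move=> _ i; lia.
rewrite !digits_numS => eq_num.
have := d_le1 m.+1; have := e_le1 m.+1 => e_top d_top.
have eq_top : d m.+1 = e m.+1 by lia.
move=> i /andP[i_gt0]; rewrite leq_eqVlt => /orP[/eqP->//|lt_im].
by apply: IH; [lia | rewrite i_gt0].
Qed.

Lemma digits_num_carry d e h m : 0 < h <= m ->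
  (forall i, 0 < i < h -> d i = e i) -> d h = 0 -> e h = 1 ->
  (forall i, h < i <= m -> d i = 1 /\ e i = 0) ->
  digits_num e m = (digits_num d m).+1.
Proof.
move=> /andP[h_gt0 le_hm] eq_low dh0 eh1 high.
elim: m le_hm high => [|m IH]; first by lia.
rewrite leq_eqVlt => /orP[/eqP eq_h|le_hm] high; rewrite !digits_numS.
  have -> : digits_num e m = digits_num d m.
    by apply: eq_digits_num => i /andP[i_gt0 le_im]; rewrite eq_low ?i_gt0 //; lia.
  by rewrite -eq_h dh0 eh1 addn0 addn1.
have [-> ->] : d m.+1 = 1 /\ e m.+1 = 0 by apply: high; lia.
by rewrite IH // => [|i /andP[lt_hi le_im]]; [lia | apply: high; lia].
Qed.

Lemma ltn_exp2_minn n m k : n < 2 ^ m -> minn n m <= k -> n < 2 ^ k.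
Proof.
move=> lt_n le_k; case: (leqP n m) => [le_nm|lt_mn].
  by apply: leq_trans (ltn_expl n (ltnSn 1)) _; rewrite leq_exp2l //; lia.
by apply: leq_trans lt_n _; rewrite leq_exp2l //; lia.
Qed.

Lemma sobol_digit1_le1 n i : sobol_digit1 n i <= 1.
Proof. exact: leq_b1. Qed.

Lemma sobol_digit2_le1 n i : sobol_digit2 n i <= 1.
Proof. by rewrite /sobol_digit2 modn2 leq_b1. Qed.

Lemma sobol_digit1_eq0 n i : n < 2 ^ i.-1 -> sobol_digit1 n i = 0.
Proof. exact: nbit_small. Qed.

Lemma sobol_digit2_eq0 n i : n < 2 ^ i.-1 -> sobol_digit2 n i = 0.
Proof.
move=> lt_n; rewrite /sobol_digit2 big1 // => k _.
have [lt_ki|le_ik] := ltnP k i.-1; first by rewrite bin_small.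
by rewrite nbit_small ?muln0 // (leq_trans lt_n) // leq_exp2l.
Qed.

Lemma sobol_digit2E m n i : n < 2 ^ m ->
  sobol_digit2 n i = odd (\sum_(k < m) 'C(k, i.-1) * nbit n k).
Proof.
move=> lt_n; rewrite /sobol_digit2 modn2 -!(big_mkord xpredT (fun k => 'C(k, i.-1) * nbit n k)).
rewrite (big_nat_trunc _ _ (b := m)) // => k le_k.
by rewrite nbit_small ?muln0 // (ltn_exp2_minn lt_n).
Qed.

Lemma sobol_num1_inj m i j : i < 2 ^ m -> j < 2 ^ m ->
  digits_num (sobol_digit1 i) m = digits_num (sobol_digit1 j) m -> i = j.
Proof.
move=> lt_i lt_j /(digits_num_inj (@sobol_digit1_le1 i) (@sobol_digit1_le1 j)) eq_digits.
by apply: (nbit_inj lt_i lt_j) => k lt_km; apply: (eq_digits k.+1).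
Qed.

Lemma sobol_num2_inj m i j : i < 2 ^ m -> j < 2 ^ m ->
  digits_num (sobol_digit2 i) m = digits_num (sobol_digit2 j) m -> i = j.
Proof.
move=> lt_i lt_j /(digits_num_inj (@sobol_digit2_le1 i) (@sobol_digit2_le1 j)) eq_digits.
apply: (nbit_inj lt_i lt_j) => k lt_km; congr (nat_of_bool _); move: k lt_km.
apply: (@pascal_mod2_inj m (fun k => odd (i %/ 2 ^ k)) (fun k => odd (j %/ 2 ^ k))).
move=> r lt_rm; have := eq_digits r.+1 lt_rm.
by rewrite (sobol_digit2E _ lt_i) (sobol_digit2E _ lt_j); do 2!case: odd.
Qed.

Local Open Scope ring_scope.

Lemma sum_digits_num (R : numFieldType) (d : nat -> nat) m :
  \sum_(1 <= i < m.+1) (d i)%:R / 2 ^+ i = (digits_num d m)%:R / 2 ^+ m :> R.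
Proof.
have two_neq0 : (2 : R) != 0 by rewrite pnatr_eq0.
elim: m => [|m IH]; first by rewrite big_geq // /digits_num big_geq // mul0r.
rewrite big_nat_recr //= IH digits_numS natrD natrM exprS; field.
by rewrite expf_neq0.
Qed.

Lemma sobol_sumE (R : numFieldType) (d : nat -> nat) m n : (n < 2 ^ m)%N ->
  (forall i, (n < 2 ^ i.-1)%N -> d i = 0%N) ->
  \sum_(1 <= i < n.+1) (d i)%:R / 2 ^+ i = (digits_num d m)%:R / 2 ^+ m :> R.
Proof.
move=> lt_n d_eq0; rewrite -sum_digits_num (big_nat_trunc _ _ (b := m.+1)) //.
  by rewrite leq_min.
move=> i le_i; rewrite d_eq0 ?mul0r // (ltn_exp2_minn lt_n) //; lia.
Qed.

Lemma sobol1E (R : realType) m n : (n < 2 ^ m)%N ->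
  sobol1 R n = (digits_num (sobol_digit1 n) m)%:R / 2 ^+ m.
Proof. by move=> lt_n; apply: sobol_sumE => // i; apply: sobol_digit1_eq0. Qed.

Lemma sobol2E (R : realType) m n : (n < 2 ^ m)%N ->
  sobol2 R n = (digits_num (sobol_digit2 n) m)%:R / 2 ^+ m.
Proof. by move=> lt_n; apply: sobol_sumE => // i; apply: sobol_digit2_eq0. Qed.

Lemma sqr_natrB_ge1 (R : realDomainType) (a b : nat) : a != b -> 1 <= (a%:R - b%:R : R) ^+ 2.
Proof.
have step (x y : nat) : (x < y)%N -> 1 <= (x%:R - y%:R : R) ^+ 2.
  by rewrite -(ler_nat R) -natr1 => le_xy; nra.
move=> neq_ab; case: (ltngtP a b) => [/step//|/step|eq_ab]; last by rewrite eq_ab eqxx in neq_ab.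
by rewrite -sqrrN opprB.
Qed.

Section SobolDistance.
Variables (R : realType) (m : nat).
Local Notation num1 n := ((digits_num (sobol_digit1 n) m)%:R : R).
Local Notation num2 n := ((digits_num (sobol_digit2 n) m)%:R : R).

Lemma sobol_distE i j : (i < 2 ^ m)%N -> (j < 2 ^ m)%N ->
  sobol_dist R i j = Num.sqrt ((num1 i - num1 j) ^+ 2 + (num2 i - num2 j) ^+ 2) / 2 ^+ m.
Proof.
move=> lt_i lt_j; rewrite /sobol_dist (sobol1E R lt_i) (sobol1E R lt_j).
rewrite (sobol2E R lt_i) (sobol2E R lt_j) -!mulrBl !exprMn -mulrDl sqrtrM ?addr_ge0 ?sqr_ge0 //.
by rewrite sqrtr_sqr ger0_norm // invr_ge0 exprn_ge0.
Qed.

Lemma sobol_dist_ge i j : (i < 2 ^ m)%N -> (j < 2 ^ m)%N -> i != j ->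
  Num.sqrt 2 / 2 ^+ m <= sobol_dist R i j.
Proof.
move=> lt_i lt_j neq_ij; rewrite (sobol_distE lt_i lt_j) ler_pM2r ?invr_gt0 ?exprn_gt0 //.
have ne1 : digits_num (sobol_digit1 i) m != digits_num (sobol_digit1 j) m.
  by apply: contra_neq neq_ij; apply: sobol_num1_inj.
have ne2 : digits_num (sobol_digit2 i) m != digits_num (sobol_digit2 j) m.
  by apply: contra_neq neq_ij; apply: sobol_num2_inj.
have := sqr_natrB_ge1 R ne1; have := sqr_natrB_ge1 R ne2.
rewrite ler_sqrt ?addr_ge0 ?sqr_ge0 // => h2 h1.
by rewrite (_ : 2 = 1 + 1) ?lerD //; lra.
Qed.

Lemma sobol_dist_succ i j : (i < 2 ^ m)%N -> (j < 2 ^ m)%N ->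
  digits_num (sobol_digit1 i) m = (digits_num (sobol_digit1 j) m).+1 ->
  digits_num (sobol_digit2 i) m = (digits_num (sobol_digit2 j) m).+1 ->
  sobol_dist R i j = Num.sqrt 2 / 2 ^+ m.
Proof.
move=> lt_i lt_j succ1 succ2.
have succB (n : nat) : (n.+1%:R - n%:R : R) = 1 by rewrite -natr1 addrAC subrr add0r.
rewrite (sobol_distE lt_i lt_j) succ1 succ2 !succB expr1n.
by rewrite (_ : 1 + 1 = 2 :> R); last lra.
Qed.
End SobolDistance.

Lemma bigmin_seq_eq (R : realDomainType) (s : seq R) x :
  x \in s -> (forall y, y \in s -> x <= y) -> \big[Num.min/head 0 s]_(y <- s) y = x.
Proof.
move=> x_in x_le; apply/le_anti/andP; split.
  elim: s (head 0 s) x_in {x_le} => // a s IH z; rewrite inE big_cons ge_min.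
  by case/orP => [/eqP->|/IH->]; rewrite ?lexx ?orbT.
rewrite big_seq; apply: (big_ind (fun y => x <= y)) => [|a b|y /x_le//].
  by case: s x_in x_le => //= a s _; apply; rewrite mem_head.
by move=> xa xb; rewrite le_min xa xb.
Qed.

Lemma sep_radius_eq (R : realType) n i j r : (i < j < n)%N -> sobol_dist R i j = r ->
  (forall i j, (i < j < n)%N -> r <= sobol_dist R i j) -> sep_radius R n = 2^-1 * r.
Proof.
move=> /andP[lt_ij lt_jn] dist_ij r_le; rewrite /sep_radius (@bigmin_seq_eq _ _ r) //.
  apply/mapP; exists (i, j) => //; rewrite mem_filter /= lt_ij.
  by apply: allpairs_f; rewrite mem_iota; lia.
move=> y /mapP[[a b]]; rewrite mem_filter /= => /andP[lt_ab].
move=> /allpairsP[[a' b'] /= [_ b_in [_ eq_b]]] ->; apply: r_le.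
by rewrite mem_iota -eq_b in b_in; rewrite lt_ab; lia.
Qed.

Section ExtremalPair.
Local Open Scope nat_scope.
Variable w : nat.
Hypothesis w_gt1 : 1 < w.
Let h := 2 ^ w.-1.
Let m := 2 ^ w - 1.
Let j0 := 2 ^ h.-1.
Let i0 := 2 ^ m - 2 ^ h.

Let h_ge2 : 2 <= h.
Proof. by rewrite /h -(expn1 2) leq_exp2l //; lia. Qed.

Let m_eq : m = h + h.-1.
Proof. by rewrite /m /h -{1}(prednK (ltnW w_gt1)) expnS; lia. Qed.

Let h_gt0 : 0 < h.
Proof. exact: ltnW. Qed.

Let le_hm : h <= m.
Proof. by rewrite m_eq leq_addr. Qed.

Let pair_lt : j0 < i0 < 2 ^ m - 1.
Proof.
have e : 2 ^ m = 2 ^ h.-1 * 2 ^ h by rewrite -expnD m_eq addnC.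
have e2 : 2 ^ h = 2 * 2 ^ h.-1 by rewrite -expnS prednK //; lia.
have : 2 <= 2 ^ h.-1 by rewrite -{1}(expn1 2) leq_exp2l //; lia.
rewrite /j0 /i0; nia.
Qed.

Let j0_lt : j0 < 2 ^ m.
Proof. by have := pair_lt; lia. Qed.

Let i0_lt : i0 < 2 ^ m.
Proof. by have := pair_lt; lia. Qed.

Let sobol_digit1_j0 i : 0 < i -> sobol_digit1 j0 i = (i == h).
Proof. by rewrite /sobol_digit1 nbitX; lia. Qed.

Let sobol_digit1_i0 i : 0 < i <= m -> sobol_digit1 i0 i = (h < i).
Proof. by rewrite /sobol_digit1 /i0 (nbit_subXX _ le_hm); lia. Qed.

Let sobol_digit2_j0 i : 0 < i -> sobol_digit2 j0 i = (i <= h).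
Proof.
move=> i_gt0; rewrite (sobol_digit2E _ j0_lt).
have -> : \sum_(k < m) 'C(k, i.-1) * nbit j0 k = \sum_(k < m | k == h.-1 :> nat) 'C(k, i.-1).
  by rewrite [RHS]big_mkcond; apply: eq_bigr => k _; rewrite nbitX mulnbr.
rewrite (big_ord1_eq _ (fun k => 'C(k, i.-1))) ifT; last lia.
by rewrite /h odd_bin_predX -/h; lia.
Qed.

Let sobol_digit2_i0 i : 0 < i <= m -> sobol_digit2 i0 i = (i != h).
Proof.
move=> /andP[i_gt0 le_im]; rewrite (sobol_digit2E _ i0_lt).
have -> : \sum_(k < m) 'C(k, i.-1) * nbit i0 k = \sum_(h <= k < m) 'C(k, i.-1).
  rewrite big_geq_mkord [RHS]big_mkcond; apply: eq_bigr => k _.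
  by rewrite /i0 (nbit_subXX _ le_hm) mulnbr ltn_ord andbT.
have := congr1 odd (hockey_stick i.-1 le_hm); rewrite prednK // oddD.
rewrite /m subn1 odd_bin_predX -subn1 -/m /h odd_binX -/h (gtn_eqF i_gt0).
rewrite (_ : i < 2 ^ w = true); last by rewrite /m in le_im; lia.
by case: (odd _); case: (i == h).
Qed.

Let sobol_num1_pair :
  digits_num (sobol_digit1 j0) m = (digits_num (sobol_digit1 i0) m).+1.
Proof.
apply: (@digits_num_carry _ _ h) => [|i /andP[i_gt0 lt_ih]|||i /andP[lt_hi le_im]].
- by rewrite h_gt0 le_hm.
- rewrite sobol_digit1_i0 ?i_gt0 ?(leq_trans (ltnW lt_ih)) // sobol_digit1_j0 //.
  by rewrite ltn_eqF // ltnNge ltnW.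
- by rewrite sobol_digit1_i0 ?h_gt0 ?le_hm // ltnn.
- by rewrite sobol_digit1_j0 // eqxx.
- have i_gt0 : 0 < i by apply: leq_ltn_trans lt_hi.
  by rewrite sobol_digit1_i0 ?i_gt0 // sobol_digit1_j0 // lt_hi gtn_eqF.
Qed.

Let sobol_num2_pair :
  digits_num (sobol_digit2 j0) m = (digits_num (sobol_digit2 i0) m).+1.
Proof.
apply: (@digits_num_carry _ _ h) => [|i /andP[i_gt0 lt_ih]|||i /andP[lt_hi le_im]].
- by rewrite h_gt0 le_hm.
- rewrite sobol_digit2_i0 ?i_gt0 ?(leq_trans (ltnW lt_ih)) // sobol_digit2_j0 //.
  by rewrite ltn_eqF // ltnW.
- by rewrite sobol_digit2_i0 ?h_gt0 ?le_hm // eqxx.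
- by rewrite sobol_digit2_j0 // leqnn.
- have i_gt0 : 0 < i by apply: leq_ltn_trans lt_hi.
  by rewrite sobol_digit2_i0 ?i_gt0 // sobol_digit2_j0 // gtn_eqF // leqNgt lt_hi.
Qed.

Lemma sobol_min_dist_attained (R : realType) :
  exists i j, (i < j < 2 ^ m - 1) /\ sobol_dist R i j = (Num.sqrt 2 / 2 ^+ m)%R.
Proof.
exists j0, i0; split; first exact: pair_lt.
by rewrite (sobol_dist_succ R j0_lt i0_lt sobol_num1_pair sobol_num2_pair).
Qed.
End ExtremalPair.

Unset Implicit Arguments.

Theorem mainTheorem1 (R : realType) (w : nat) :
  (1 < w)%N ->
  sep_radius R (2 ^ (2 ^ w - 1) - 1) =
    1 / (Num.sqrt 2 * ((2 ^ (2 ^ w - 1) - 1).+1)%:R).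
Proof.
move=> w_gt1; set m := (2 ^ w - 1)%N.
have [i [j [ij_lt dist_ij]]] := sobol_min_dist_attained w_gt1 R.
rewrite (sep_radius_eq ij_lt dist_ij) => [|i' j' ij'_lt]; last first.
  by apply: sobol_dist_ge; lia.
rewrite -/m subn1 prednK ?expn_gt0 // natrX.
have sqrt2_sq : Num.sqrt 2 ^+ 2 = 2 :> R by rewrite sqr_sqrtr.
have sqrt2_neq0 : Num.sqrt 2 != 0 :> R by rewrite sqrtr_eq0 -ltNge.
rewrite -{1}sqrt2_sq; field.
by rewrite sqrt2_neq0 andbT expf_neq0 // pnatr_eq0.
Qed.
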